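(* Let $X$ and $Y$ be Alexandroff spaces satisfying: (i) there is a bijection $b:\{S(x):x\in X\}\to\{S(y):y\in Y\}$; (ii) for each $x\in X$ there is a homeomorphism $f_x:S(x)\to b(S(x))$ (subspace topologies); (iii) for all $x_1,x_2\in X$, if $S(x_1)\cap S(x_2)\neq\emptyset$ then $f_{x_1}(S(x_1)\cap S(x_2))=f_{x_2}(S(x_1)\cap S(x_2))$. Then $X$ and $Y$ are homeomorphic.
   Context: A topological space $X$ is an Alexandroff space if arbitrary intersections of open sets are open. In an Alexandroff space, $S(x)$ denotes the minimal open neighborhood of $x$, i.e. the intersection of all open sets containing $x$, which is open. *)

From HB Require Import structures.
From mathcomp Require Import all_boot all_order all_algebra.
From mathcomp Require Import all_classical all_reals all_analysis.
Set Implicit Arguments. Unset Strict Implicit. Unset Printing Implicit Defensive.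
Local Open Scope classical_set_scope.

Definition alexandroff (T : topologicalType) : Prop :=
  forall (F : set (set T)), (forall U, F U -> open U) -> open (\bigcap_(U in F) U).

Definition minnbhs (T : topologicalType) (x : T) : set T :=
  \bigcap_(U in [set U : set T | open U /\ U x]) U.

Definition homeo_on (T U : topologicalType) (A : set T) (B : set U)
  (f : T -> U) : Prop :=
  exists g : U -> T,
    (forall a, A a -> B (f a)) /\
    (forall b, B b -> A (g b)) /\
    (forall a, A a -> g (f a) = a) /\
    (forall b, B b -> f (g b) = b) /\
    {within A, continuous f} /\
    {within B, continuous g}.

Definition homeomorphic (T U : topologicalType) : Prop :=
  exists (f : T -> U) (g : U -> T),
    [/\ cancel f g, cancel g f, continuous f & continuous g].

(* The map [F z := f_{r(z)} z], where [r(z)] is a chosen point with the same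
   minimal neighbourhood as [z], is the homeomorphism.  Compatibility and the
   fact that homeomorphisms of open subspaces preserve minimal neighbourhoods
   give [S(F z) = b(S z)]; since [b] is injective on minimal neighbourhoods,
   [F] is a bijection with [F z' \in S(F z) <-> z' \in S(z)], and a map between
   Alexandroff spaces preserving the specialization order is continuous. *)
From mathcomp Require Import all_boot all_order all_algebra.
From mathcomp Require Import all_classical all_reals all_analysis.
Local Open Scope classical_set_scope.

Section MinimalNeighbourhoods.
Context {T : topologicalType}.

Lemma minnbhs_self (x : T) : minnbhs x x.
Proof. by move=> V [_]. Qed.

Lemma minnbhs_sub_open {x : T} {V : set T} : open V -> V x -> minnbhs x `<=` V.
Proof. by move=> oV Vx y; apply. Qed.

Lemma minnbhs_sub_nbhs {x : T} {V : set T} : nbhs x V -> minnbhs x `<=` V.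
Proof. by rewrite nbhsE => -[W [oW Wx] WV] y Sy; apply: WV; exact: Sy. Qed.

Hypothesis alexT : alexandroff T.

Lemma open_minnbhs (x : T) : open (minnbhs x).
Proof. by apply: alexT => V []. Qed.

Lemma minnbhs_sub {x y : T} : minnbhs x y -> minnbhs y `<=` minnbhs x.
Proof. by move=> Sxy; apply: minnbhs_sub_open => //; exact: open_minnbhs. Qed.

Lemma continuous_minnbhs_homo {U : topologicalType} (h : T -> U) :
  (forall x y, minnbhs x y -> minnbhs (h x) (h y)) -> continuous h.
Proof.
move=> h_homo; apply/continuousP => V oV; rewrite openE => x Vhx.
apply: (@filterS _ _ _ (minnbhs x)); last first.
  by apply: open_nbhs_nbhs; split; [exact: open_minnbhs | exact: minnbhs_self].
by move=> y Sxy; exact: (h_homo x y Sxy V (conj oV Vhx)).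
Qed.

End MinimalNeighbourhoods.

Lemma within_continuous_minnbhs {T U : topologicalType} {A : set T}
    {h : T -> U} (hc : {within A, continuous h}) {x y : T} :
  A x -> A y -> minnbhs x y -> minnbhs (h x) (h y).
Proof.
move=> Ax Ay Sxy V [oV Vhx].
have hV : nbhs_subspace (x : subspace A) (h @^-1` V).
  exact: hc x V (open_nbhs_nbhs (conj oV Vhx)).
rewrite -(nbhs_subspace_in Ax) in hV.
exact: minnbhs_sub_nbhs hV y Sxy Ay.
Qed.

Section HomeomorphismsOnSubspaces.
Context {T U : topologicalType} {A : set T} {B : set U} {f : T -> U}.
Hypothesis f_homeo : homeo_on A B f.

Lemma homeo_on_image : f @` A = B.
Proof.
have [g [fAB [gBA [_ [fgK _]]]]] := f_homeo.
apply/seteqP; split; first by move=> _ [a Aa <-]; exact: fAB.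
by move=> y By; exists (g y); [exact: gBA | exact: fgK].
Qed.

Lemma homeo_on_inj {x y : T} : A x -> A y -> f x = f y -> x = y.
Proof.
have [g [_ [_ [gfK _]]]] := f_homeo.
by move=> Ax Ay fxy; rewrite -(gfK x Ax) fxy gfK.
Qed.

(* Requires [B] open so that [S(f x)] stays inside the domain of the inverse. *)
Lemma homeo_on_minnbhs {x : T} : open B -> A x -> minnbhs x `<=` A ->
  minnbhs (f x) = f @` minnbhs x.
Proof.
have [g [fAB [gBA [gfK [fgK [fc gc]]]]]] := f_homeo.
move=> oB Ax SxA; apply/seteqP; split => [y Sy|_ [z Sz <-]]; last first.
  exact: (within_continuous_minnbhs fc Ax (SxA z Sz)).
have By : B y := minnbhs_sub_open oB (fAB x Ax) y Sy.
have := within_continuous_minnbhs gc (fAB x Ax) By Sy; rewrite gfK // => Sg.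
by exists (g y) => //; exact: fgK.
Qed.

End HomeomorphismsOnSubspaces.

(* Distinct points may share a minimal neighbourhood; using one chart for all
   of them is what makes [glue_charts] injective. *)
Definition minnbhs_rep {T : topologicalType} (z : T) : T :=
  xget z [set x | minnbhs x = minnbhs z].

Lemma minnbhs_repE {T : topologicalType} (z : T) :
  minnbhs (minnbhs_rep z) = minnbhs z.
Proof. exact: (@xgetI _ z [set x | minnbhs x = minnbhs z] z). Qed.

Lemma minnbhs_rep_eq {T : topologicalType} {z z' : T} :
  minnbhs z = minnbhs z' -> minnbhs_rep z = minnbhs_rep z'.
Proof.
move=> E; rewrite /minnbhs_rep /xget E; case: pselect => // -[].
by exists z'; apply/asboolP.
Qed.

Lemma minnbhs_rep_self {T : topologicalType} (z : T) : minnbhs (minnbhs_rep z) z.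
Proof. by rewrite minnbhs_repE; exact: minnbhs_self. Qed.

Definition glue_charts {X Y : topologicalType} (f : X -> X -> Y) (z : X) : Y :=
  f (minnbhs_rep z) z.

Section GluingCharts.
Context {X Y : topologicalType} {b : set X -> set Y} {f : X -> X -> Y}.
Hypotheses (alexX : alexandroff X) (alexY : alexandroff Y).
Hypothesis b_into : forall x : X, exists y : Y, b (minnbhs x) = minnbhs y.
Hypothesis b_inj : forall x1 x2 : X,
  b (minnbhs x1) = b (minnbhs x2) -> minnbhs x1 = minnbhs x2.
Hypothesis b_onto : forall y : Y, exists x : X, b (minnbhs x) = minnbhs y.
Hypothesis f_homeo : forall x : X, homeo_on (minnbhs x) (b (minnbhs x)) (f x).
Hypothesis f_compat : forall x1 x2 : X, minnbhs x1 `&` minnbhs x2 !=set0 ->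
  f x1 @` (minnbhs x1 `&` minnbhs x2) = f x2 @` (minnbhs x1 `&` minnbhs x2).

Local Notation F := (glue_charts f).

Lemma image_chart_minnbhs {x w : X} : minnbhs x w ->
  f x @` minnbhs w = b (minnbhs w).
Proof.
move=> Sxw; have Sw_sub := minnbhs_sub alexX Sxw.
have Sxw_ne : minnbhs x `&` minnbhs w !=set0.
  by exists w; split; last exact: minnbhs_self.
by have := f_compat _ _ Sxw_ne; rewrite setIidr // => ->; exact: homeo_on_image.
Qed.

Lemma minnbhs_chart {x w : X} : minnbhs x w -> minnbhs (f x w) = b (minnbhs w).
Proof.
move=> Sxw; rewrite -(image_chart_minnbhs Sxw) (homeo_on_minnbhs (f_homeo x)) //.
- by have [y ->] := b_into x; exact: open_minnbhs.
- exact: minnbhs_sub.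
Qed.

Lemma minnbhs_glue_charts (z : X) : minnbhs (F z) = b (minnbhs z).
Proof. exact: minnbhs_chart (minnbhs_rep_self z). Qed.

Lemma glue_charts_mono : {mono F : z z' / minnbhs z z'}.
Proof.
move=> z z'; apply/propext; split => [|Szz'].
  rewrite minnbhs_glue_charts -(image_chart_minnbhs (minnbhs_rep_self z)).
  move=> [u Su Fz'E].
  have Sru : minnbhs (minnbhs_rep z) u by rewrite minnbhs_repE.
  have Su_z' : minnbhs u = minnbhs z'.
    by apply: b_inj; rewrite -(minnbhs_chart Sru) Fz'E minnbhs_glue_charts.
  by apply: (minnbhs_sub alexX Su); rewrite Su_z'; exact: minnbhs_self.
have b_sub : b (minnbhs z') `<=` b (minnbhs z).
  rewrite -(image_chart_minnbhs Szz') -(image_chart_minnbhs (minnbhs_self z)).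
  exact: image_subset (minnbhs_sub alexX Szz').
rewrite minnbhs_glue_charts; apply: b_sub.
by rewrite -minnbhs_glue_charts; exact: minnbhs_self.
Qed.

Lemma glue_charts_inj : injective F.
Proof.
move=> z z' Fzz'.
have Szz' : minnbhs z = minnbhs z'.
  by apply: b_inj; rewrite -!minnbhs_glue_charts Fzz'.
have repE := minnbhs_rep_eq Szz'.
move: Fzz'; rewrite /glue_charts repE.
by apply: (homeo_on_inj (f_homeo _)); [rewrite -repE|]; exact: minnbhs_rep_self.
Qed.

Lemma glue_charts_surj (y : Y) : exists z, F z = y.
Proof.
have [x bxE] := b_onto y; set r := minnbhs_rep x.
have [g [_ [gBA [_ [fgK _]]]]] := f_homeo r.
have By : b (minnbhs r) y by rewrite minnbhs_repE bxE; exact: minnbhs_self.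
have Srg : minnbhs r (g y) := gBA y By.
have Sg_r : minnbhs (g y) = minnbhs r.
  by apply: b_inj; rewrite -(minnbhs_chart Srg) fgK // minnbhs_repE bxE.
have rgE : minnbhs_rep (g y) = r.
  by rewrite (minnbhs_rep_eq Sg_r) (minnbhs_rep_eq (minnbhs_repE x)).
by exists (g y); rewrite /glue_charts rgE fgK.
Qed.

End GluingCharts.

Theorem theorem13 (X Y : topologicalType)
  (alexX : alexandroff X) (alexY : alexandroff Y)
  (b : set X -> set Y)
  (b_into : forall x : X, exists y : Y, b (minnbhs x) = minnbhs y)
  (b_inj : forall x1 x2 : X, b (minnbhs x1) = b (minnbhs x2) ->
                             minnbhs x1 = minnbhs x2)
  (b_onto : forall y : Y, exists x : X, b (minnbhs x) = minnbhs y)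
  (f : X -> X -> Y)
  (f_homeo : forall x : X, homeo_on (minnbhs x) (b (minnbhs x)) (f x))
  (f_compat : forall x1 x2 : X, minnbhs x1 `&` minnbhs x2 !=set0 ->
     f x1 @` (minnbhs x1 `&` minnbhs x2) = f x2 @` (minnbhs x1 `&` minnbhs x2)) :
  homeomorphic X Y.
Proof.
have /choice [G FGK] :=
  glue_charts_surj alexX alexY b_into b_inj b_onto f_homeo f_compat.
set F := glue_charts f in FGK *.
have F_mono : {mono F : z z' / minnbhs z z'}.
  exact: glue_charts_mono alexX alexY b_into b_inj f_homeo f_compat.
have F_inj : injective F.
  exact: glue_charts_inj alexX alexY b_into b_inj f_homeo f_compat.
exists F, G; split => //.
- by move=> z; apply: F_inj; rewrite FGK.
- by apply: continuous_minnbhs_homo => // z z'; rewrite F_mono.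
- by apply: continuous_minnbhs_homo => // y y'; rewrite -F_mono !FGK.
Qed.
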